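(* Let $G$ be a well-shaped mesh in $d$ dimensions with maximum degree $b$, and let $G_p=(V_p,E_p)\subseteq G$ be an induced subgraph. The output $G_{px}=(V_{px},E_{px})$, $G_{py}=(V_{py},E_{py})$ of FullyBalancedPartition$(G_p)$ is a fully-balanced $f$-partition of $G_p$ with $f(N)=O(N^{1-1/d})$; that is, $|E(G_{px},G_{py})|\le f(|V_p|)$, $|V_{px}|=|V_{py}|\pm O(1)$, and $|\mathrm{outgoing}(G_{px})|=|\mathrm{outgoing}(G_{py})|\pm O(1)$.
   Context: A well-shaped mesh in $d$ dimensions ($d>1$ constant) is the graph of a decomposition of a domain in $\mathbb{R}^d$ into interior-disjoint simplices meeting only in lower-dimensional simplices, each with aspect ratio bounded by a fixed constant; it has bounded degree $b$. Asymptotic constants may depend on $d$, $b$ and the aspect-ratio bound. For a partition of $G_p$ into $G_{px},G_{py}$, $\mathrm{outgoing}(G_{px})=E(G_{px},G-G_p)$ is the set of edges from vertices of $G_{px}$ to vertices of $G$ outside $G_p$, similarly for $G_{py}$. Geometric separator step: the randomized algorithm of Miller, Teng, Thurston and Vavasis, applied to an induced subgraph $H$ with vertex set $V_H$, repeatedly draws a random sphere separator and accepts once the resulting partition of $V_H$ has both parts of size at most $\beta|V_H|$ with $\beta=(d+1+\epsilon)/(d+2)$ (fixed $0<\epsilon<1$) and at most $c|V_H|^{1-1/d}$ crossing edges. A decomposition tree of $H$ is obtained by applying this separator to $H$ and recursively to each part until parts are single vertices; its leaves are ordered left to right. FullyBalancedPartition$(G_p)$: (1) build such a decomposition tree $T$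 of $G_p$; (2) form a red-blue array by listing the vertices $v$ of $G_p$ in left-to-right leaf order of $T$, writing a blue element for $v$ followed by $|E(v,G-G_p)|$ red elements; (3) find a contiguous subarray containing half the blue elements to within one and half the red elements to within one; let $V_{px}$ be the vertices whose blue elements lie in the subarray and $V_{py}=V_p\setminus V_{px}$; (4) let $G_{px},G_{py}$ be the induced subgraphs. *)

From HB Require Import structures.
From mathcomp Require Import all_boot all_order all_algebra.
From mathcomp Require Import reals exp.
Set Implicit Arguments. Unset Strict Implicit. Unset Printing Implicit Defensive.
Import Order.TTheory GRing.Theory Num.Theory.
Local Open Scope ring_scope.

Section Mesh.
Variables (R : realType) (d : nat) (T : finType).

Definition dist2 (x y : 'rV[R]_d) : R := \sum_(i < d) (x 0 i - y 0 i) ^+ 2.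

Definition conv (pos : T -> 'rV[R]_d) (s : {set T}) : 'rV[R]_d -> Prop :=
  fun x => exists lam : T -> R,
    [/\ forall v, 0 <= lam v, forall v, v \notin s -> lam v = 0,
        \sum_v lam v = 1 & x = \sum_v lam v *: pos v].

(* aspect ratio (radius of a containing ball / radius of an inscribed ball)
   of the simplex s is at most alpha *)
Definition aspect_le (pos : T -> 'rV[R]_d) (alpha : R) (s : {set T}) : Prop :=
  exists (r : R) (z w : 'rV[R]_d), 0 < r /\
    (forall x, dist2 x z <= r ^+ 2 -> conv pos s x) /\
    (forall x, conv pos s x -> dist2 x w <= (alpha * r) ^+ 2).

(* graph (1-skeleton) of a simplicial decomposition *)
Definition mesh_edge (S : {set {set T}}) : rel T :=
  fun x y => (x != y) && [exists s in S, (x \in s) && (y \in s)].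

(* S is a well-shaped mesh: a decomposition of a domain of R^d into
   d-simplices (d+1 vertices, full-dimensional as they contain a ball) that
   meet only in common lower-dimensional faces, with aspect ratio <= alpha;
   every graph vertex is a vertex of some simplex, positions distinct, and
   the graph has maximum degree <= b. *)
Definition well_shaped_mesh (pos : T -> 'rV[R]_d) (S : {set {set T}})
    (alpha : R) (b : nat) : Prop :=
  [/\ injective pos,
      forall v, exists2 s, s \in S & v \in s,
      forall s, s \in S -> #|s| = d.+1 /\ aspect_le pos alpha s,
      forall s t, s \in S -> t \in S ->
        forall x, (conv pos s x /\ conv pos t x) <-> conv pos (s :&: t) x
    & forall v, #|[set y | mesh_edge S v y]| <= b]%N.

End Mesh.

Section Partition.
Variables (R : realType) (T : finType) (e : rel T).

(* |E(A,B)| for disjoint A, B *)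
Definition cut (A B : {set T}) : nat :=
  #|[set p : T * T | [&& p.1 \in A, p.2 \in B & e p.1 p.2]]|.

(* |outgoing(A)| w.r.t. G_p with vertex set Vp: edges from A to G - G_p *)
Definition outgoing (Vp A : {set T}) : nat := cut A (~: Vp).

(* acceptance criterion of the geometric separator step on H *)
Definition sep_ok (d : nat) (beta c : R) (H A B : {set T}) : Prop :=
  [/\ A :|: B = H, A :&: B = set0,
      (#|A|%:R <= beta * #|H|%:R), (#|B|%:R <= beta * #|H|%:R)
    & (cut A B)%:R <= c * powR (#|H|%:R) (1 - d%:R^-1)].

Inductive dtree := DLeaf of T | DNode of dtree & dtree.

Fixpoint leaves (t : dtree) : seq T :=
  match t with DLeaf v => [:: v] | DNode l r => leaves l ++ leaves r end.

Definition leafset (t : dtree) : {set T} := [set x | x \in leaves t].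

Fixpoint dtree_ok (d : nat) (beta c : R) (t : dtree) : Prop :=
  match t with
  | DLeaf _ => True
  | DNode l r => [/\ dtree_ok d beta c l, dtree_ok d beta c r
                   & sep_ok d beta c (leafset t) (leafset l) (leafset r)]
  end.

(* red-blue array: Some v = blue element of v, None = red element *)
Definition red_blue (Vp : {set T}) (t : dtree) : seq (option T) :=
  flatten [seq Some v :: nseq (outgoing Vp [set v]) None | v <- leaves t].

Definition nblue (s : seq (option T)) : nat := count (fun o => o != None) s.
Definition nred (s : seq (option T)) : nat := count (fun o => o == None) s.

Definition subarray (s : seq (option T)) (i j : nat) := take (j - i) (drop i s).

(* step (3): the subarray contains half the blue and half the red elements
   to within one *)
Definition half_within_one (part total : nat) : Prop :=
  (`|(2 * part)%:Z - total%:Z| <= 2)%R.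

Definition chosen_set (s : seq (option T)) : {set T} := [set v | Some v \in s].

(* (Vpx, Vpy) is a possible output of FullyBalancedPartition(G_p) *)
Definition FBP_output (d : nat) (eps c : R) (Vp Vpx Vpy : {set T}) : Prop :=
  exists (t : dtree) (i j : nat),
    let beta := (d%:R + 1 + eps) / (d%:R + 2) in
    let arr := red_blue Vp t in
    let sub := subarray arr i j in
    [/\ dtree_ok d beta c t, leafset t = Vp, (i <= j <= size arr)%N,
        half_within_one (nblue sub) (nblue arr) /\
        half_within_one (nred sub) (nred arr)
      & Vpx = chosen_set sub /\ Vpy = Vp :\: Vpx].

End Partition.

From HB Require Import structures.
From mathcomp Require Import all_boot all_order all_algebra.
From mathcomp Require Import reals exp.
From mathcomp.algebra_tactics Require Import ring lra.
From mathcomp Require Import zify.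
Import Order.TTheory GRing.Theory Num.Theory.
Set Implicit Arguments. Unset Strict Implicit. Unset Printing Implicit Defensive.

(* A separator node splits its vertex set H into parts of size at most
   beta |H| with at most c |H|^a crossing edges, a = 1 - 1/d, and |.|^a shrinks
   by the factor rho = beta^a < 1 from a node to its children.  A cut of the
   leaf order into a prefix and a suffix falls inside one child, so the edges
   across it are edges across a cut of that child plus root separator edges;
   by induction there are at most K |H|^a of them, K = c / (1 - rho).  The
   chosen subarray is a contiguous segment of the leaf order, so its cut to
   the rest is bounded by two such prefix cuts.  Balance comes from the blue
   elements counting vertices, while the red elements of a segment miss or
   overshoot the outgoing degrees of its vertices by at most one degree
   (bounded by b) at each end. *)


Section Cut.
Variables (T : finType) (e : rel T).

Lemma cutS (A A' B B' : {set T}) :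
  A \subset A' -> B \subset B' -> (cut e A B <= cut e A' B')%N.
Proof.
move=> sA sB; apply: subset_leq_card; apply/subsetP=> p.
by rewrite !inE => /and3P[/(subsetP sA)-> /(subsetP sB)-> ->].
Qed.

Lemma cut0s (B : {set T}) : cut e set0 B = 0%N.
Proof. by apply/eqP; rewrite cards_eq0; apply/eqP/setP=> p; rewrite !inE. Qed.

Lemma cuts0 (A : {set T}) : cut e A set0 = 0%N.
Proof. by apply/eqP; rewrite cards_eq0; apply/eqP/setP=> p; rewrite !inE andbF. Qed.

Lemma cutUs (A A' B : {set T}) : (cut e (A :|: A') B <= cut e A B + cut e A' B)%N.
Proof.
apply: leq_trans (leq_card_setU _ _); apply: subset_leq_card.
by apply/subsetP=> p; rewrite !inE; case/and3P=> /orP[] -> -> ->; rewrite ?orbT.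
Qed.

Lemma cutsU (A B B' : {set T}) : (cut e A (B :|: B') <= cut e A B + cut e A B')%N.
Proof.
apply: leq_trans (leq_card_setU _ _); apply: subset_leq_card.
by apply/subsetP=> p; rewrite !inE; case/and3P=> -> /orP[] -> ->; rewrite ?orbT.
Qed.

Lemma cutUs_disjoint (A A' B : {set T}) : [disjoint A & A'] ->
  cut e (A :|: A') B = (cut e A B + cut e A' B)%N.
Proof.
move=> dAA'; rewrite /cut -cardsUI.
set I := (_ :&: _); have -> : I = set0.
  apply/setP=> p; rewrite !inE; apply/negbTE.
  by case: (boolP (p.1 \in A)) => // /(disjointFr dAA') ->; rewrite !andbF.
rewrite cards0 addn0; apply: eq_card => p; rewrite !inE.
by rewrite andb_orl.
Qed.

Lemma cut_big_set1 (s : seq T) (D : {set T}) : uniq s ->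
  cut e [set x in s] D = (\sum_(v <- s) cut e [set v] D)%N.
Proof.
elim: s => [|v s IH] /=.
  by rewrite big_nil -(cut0s D) set_nil.
case/andP=> vs us; rewrite big_cons -IH // -cutUs_disjoint.
  by rewrite set_cons.
by rewrite disjoints1 inE.
Qed.

Lemma set_cat (s s' : seq T) : [set x in s ++ s'] = [set x in s] :|: [set x in s'].
Proof. by apply/setP=> x; rewrite !inE mem_cat. Qed.

Hypothesis e_sym : symmetric e.

Lemma cutC (A B : {set T}) : cut e A B = cut e B A.
Proof.
have swapK : involutive (fun p : T * T => (p.2, p.1)) by case.
suff le_cutC X Y : (cut e X Y <= cut e Y X)%N by apply/eqP; rewrite eqn_leq !le_cutC.
rewrite /cut -(card_imset _ (inv_inj swapK)); apply: subset_leq_card.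
apply/subsetP=> q /imsetP[p]; rewrite !inE => /and3P[h1 h2 h3] ->/=.
by rewrite h1 h2 e_sym h3.
Qed.
End Cut.

Lemma cat_eq_cat (X : Type) (p q l r : seq X) : p ++ q = l ++ r ->
  (exists w, l = p ++ w /\ q = w ++ r) \/ (exists w, p = l ++ w /\ r = w ++ q).
Proof.
elim: p l => [|x p IH] [|y l] /=.
- by move=> ->; left; exists [::].
- by move=> ->; left; exists (y :: l).
- by move=> <-; right; exists (x :: p).
- by case=> -> /IH [[w [-> ->]]|[w [-> ->]]]; [left|right]; exists w.
Qed.

Local Open Scope ring_scope.

Section DecompositionTree.
Variables (R : realType) (T : finType) (e : rel T) (d : nat) (beta c : R).

Local Notation P n := (powR (n%:R : R) (1 - d%:R^-1)).

Lemma uniq_leaves t : dtree_ok e d beta c t -> uniq (leaves t).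
Proof.
elim: t => [v|l IHl r IHr] //= [okl okr [_ lr0 _ _ _]].
rewrite cat_uniq IHl // IHr // andbT; apply/hasPn=> x xr; apply/negP=> xl.
by have := congr1 (fun X : {set T} => x \in X) lr0; rewrite !inE xl xr.
Qed.

Variables (rho K : R).
Hypothesis P_contr : forall m n : nat, m%:R <= beta * n%:R -> P m <= rho * P n.
Hypothesis K_ge0 : 0 <= K.
Hypothesis K_fix : K * rho + c = K.

Lemma cut_le_recurrence (x y z : nat) (n m : nat) :
  (x <= y + z)%N -> y%:R <= K * P m -> z%:R <= c * P n -> P m <= rho * P n ->
  x%:R <= K * P n.
Proof.
rewrite -(ler_nat R) natrD => xyz hy hz hmn.
have : K * P m <= K * (rho * P n) by rewrite ler_wpM2l.
have : K * (rho * P n) + c * P n = K * P n by rewrite mulrA -mulrDl K_fix.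
lra.
Qed.

Lemma leaves_cut_le t p q : dtree_ok e d beta c t -> leaves t = p ++ q ->
  (cut e [set x in p] [set x in q])%:R <= K * P #|leafset t|.
Proof.
elim: t p q => [v|l IHl r IHr] p q.
  move=> _; case: p => [|x [|? ?]] //=; first by rewrite set_nil cut0s mulr_ge0 ?powR_ge0.
  by case: q => [|? ?] // _; rewrite set_nil cuts0 mulr_ge0 ?powR_ge0.
move=> /= [okl okr [_ _ /P_contr hl /P_contr hr hcut]].
move/esym/cat_eq_cat=> [[w [el ->]]|[w [-> er]]]; rewrite set_cat.
- apply: (cut_le_recurrence (cutsU _ _ _ _) (IHl _ _ okl el) _ hl).
  by apply: le_trans hcut; rewrite ler_nat cutS // /leafset el set_cat subsetUl.
- apply: (cut_le_recurrence _ (IHr _ _ okr er) _ hr); first by rewrite addnC; apply: cutUs.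
  by apply: le_trans hcut; rewrite ler_nat cutS // /leafset er set_cat subsetUr.
Qed.

Lemma segment_cut_le t p s q : symmetric e -> dtree_ok e d beta c t ->
  leaves t = p ++ s ++ q ->
  (cut e [set x in s] ([set x in p] :|: [set x in q]))%:R <= 2 * K * P #|leafset t|.
Proof.
move=> e_sym ok ht; apply: le_trans (_ : (cut e [set x in p] [set x in s ++ q] +
  cut e [set x in p ++ s] [set x in q])%:R <= _).
  rewrite ler_nat; apply: leq_trans (cutsU _ _ _ _) _.
  by rewrite cutC // leq_add // cutS // set_cat ?subsetUl ?subsetUr.
by rewrite natrD -mulrA mulr2n mulrDl !mul1r lerD // (leaves_cut_le ok) -?catA.
Qed.
End DecompositionTree.

Section RedBlueArray.
Local Open Scope nat_scope.
Variables (T : finType) (w : T -> nat) (b : nat).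

Definition weighted_array (s : seq T) : seq (option T) :=
  flatten [seq Some v :: nseq (w v) None | v <- s].

Lemma weighted_array_cons v s :
  weighted_array (v :: s) = Some v :: nseq (w v) None ++ weighted_array s.
Proof. by []. Qed.

Lemma pmap_id_nseq_None n : pmap id (nseq n (@None T)) = [::].
Proof. by elim: n. Qed.

Lemma blue_weighted_array s : pmap id (weighted_array s) = s.
Proof.
by elim: s => // v s IH; rewrite weighted_array_cons /= pmap_cat pmap_id_nseq_None IH.
Qed.

Lemma nblueE (x : seq (option T)) : nblue x = size (pmap id x).
Proof. by elim: x => //= [[v|] x IH]; rewrite /nblue /= -/(nblue x) IH. Qed.

Lemma nred_cat (x y : seq (option T)) : nred (x ++ y) = nred x + nred y.
Proof. exact: count_cat. Qed.

Lemma nred_nseq_None n : nred (nseq n (@None T)) = n.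
Proof. by rewrite /nred count_nseq mul1n. Qed.

Lemma nred_weighted_array s : nred (weighted_array s) = \sum_(v <- s) w v.
Proof.
elim: s => [|v s IH]; first by rewrite big_nil.
by rewrite weighted_array_cons big_cons /= nred_cat nred_nseq_None IH.
Qed.

Lemma pmap_id_subarray_segments (x : seq (option T)) i j : i <= j ->
  pmap id x = pmap id (take i x) ++ pmap id (subarray x i j) ++ pmap id (drop j x).
Proof.
move=> ij; rewrite -!pmap_cat catA /subarray -takeD subnKC //.
by rewrite cat_take_drop.
Qed.

Hypothesis w_le : forall v, w v <= b.

(* Each blue element is followed by its own red elements, so a prefix can
   only miss the red elements of its last blue element. *)
Lemma nred_take_weighted_array s k :
  nred (take k (weighted_array s)) <= \sum_(v <- pmap id (take k (weighted_array s))) w v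
    <= nred (take k (weighted_array s)) + b.
Proof.
elim: s k => [|v s IH] [|k]; rewrite ?take0 ?big_nil //.
rewrite weighted_array_cons /= add0n big_cons take_cat size_nseq.
case: ltnP => hk.
  rewrite take_nseq ?(ltnW hk) // pmap_id_nseq_None nred_nseq_None big_nil addn0.
  by rewrite ltnW //= (leq_trans (w_le v)) ?leq_addl.
rewrite pmap_cat pmap_id_nseq_None /= nred_cat nred_nseq_None.
by case/andP: (IH (k - w v)) => h1 h2; rewrite leq_add2l h1 -addnA leq_add2l.
Qed.

Lemma weight_subarray_near (s : seq T) i j : let x := weighted_array s in i <= j ->
  nred (subarray x i j) <= \sum_(v <- pmap id (subarray x i j)) w v + b /\
  \sum_(v <- pmap id (subarray x i j)) w v <= nred (subarray x i j) + b.
Proof.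
move=> x ij; have tj : take j x = take i x ++ subarray x i j.
  by rewrite /subarray -takeD subnKC.
have /andP[hi1 hi2] := nred_take_weighted_array s i.
have := nred_take_weighted_array s j; rewrite -/x tj nred_cat pmap_cat big_cat /=.
by case/andP; move: hi1 hi2; rewrite -/x; lia.
Qed.

End RedBlueArray.

Lemma setD_cat_uniq (T : finType) (p s q : seq T) : uniq (p ++ s ++ q) ->
  [set x in p ++ s ++ q] :\: [set x in s] = [set x in p ++ q].
Proof.
rewrite !cat_uniq => /and3P[_ /hasPn ps /and3P[_ /hasPn sq _]].
apply/setP=> x; rewrite !inE !mem_cat; case xs: (x \in s) => /=; last by [].
have /negPf-> : x \notin p by apply: ps; rewrite mem_cat xs.
by case xq: (x \in q) => //; have := sq _ xq; rewrite xs.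
Qed.

Lemma near_half_balance (R : realDomainType) (X Y r m : nat) :
  half_within_one r (X + Y) -> (r <= X + m)%N -> (X <= r + m)%N ->
  `|X%:R - Y%:R| <= (2 * m + 2)%:R :> R.
Proof.
rewrite /half_within_one => h2 h3 h4.
have [h5 h6] : (X <= Y + 2 * m + 2 /\ Y <= X + 2 * m + 2)%N by lia.
move: h5 h6; rewrite -!(ler_nat R) !natrD => h5 h6.
by rewrite ler_norml; apply/andP; split; lra.
Qed.

Section FullyBalancedPartition.
Variables (R : realType) (T : finType) (e : rel T) (d : nat) (eps c : R).
Variables (Vp Vpx Vpy : {set T}).

Local Notation beta := ((d%:R + 1 + eps) / (d%:R + 2) : R).
Local Notation out v := (outgoing e Vp [set v]).

(* [r] is the number of red elements of the chosen subarray. *)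
Lemma FBP_outputP : FBP_output e d eps c Vp Vpx Vpy ->
  exists t p s q r, [/\ dtree_ok e d beta c t, leafset t = Vp, leaves t = p ++ s ++ q,
    Vpx = [set x in s] /\ Vpy = [set x in p ++ q]
  & [/\ half_within_one (size s) (size (leaves t)),
        half_within_one r (\sum_(v <- leaves t) out v)
      & forall b, (forall v, out v <= b)%N ->
          (r <= \sum_(v <- s) out v + b)%N /\ (\sum_(v <- s) out v <= r + b)%N]].
Proof.
case=> t [i [j]] /=; set arr := red_blue e Vp t.
case=> ok tVp /andP[ij _] [hb hr] [hx hy].
have arrE : arr = weighted_array (fun v => out v) (leaves t) by [].
have hL := pmap_id_subarray_segments arr ij.
rewrite arrE blue_weighted_array -arrE in hL.
have hVpx : Vpx = [set x in pmap id (subarray arr i j)].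
  by rewrite hx; apply/setP=> v; rewrite !inE mem_pmap map_id.
exists t, (pmap id (take i arr)), (pmap id (subarray arr i j)), (pmap id (drop j arr)).
exists (nred (subarray arr i j)); split=> //.
  by rewrite hy hVpx -tVp /leafset hL setD_cat_uniq // -hL (uniq_leaves ok).
split.
- by rewrite -nblueE -(blue_weighted_array (fun v => out v) (leaves t)) -arrE -nblueE.
- by rewrite -nred_weighted_array -arrE.
by move=> b out_le; rewrite arrE; apply: weight_subarray_near.
Qed.

Hypothesis FBP : FBP_output e d eps c Vp Vpx Vpy.

Lemma FBP_card_balance : `|#|Vpx|%:R - #|Vpy|%:R| <= 2%:R :> R.
Proof.
have [t [p [s [q [r [ok _ ht [-> ->] [hs _ _]]]]]]] := FBP_outputP FBP.
have : uniq (s ++ p ++ q) by rewrite uniq_catCA -ht (uniq_leaves ok).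
rewrite cat_uniq => /and3P[us _ upq].
rewrite !cardsE !(card_uniqP _) //; apply: (@near_half_balance _ _ _ (size s) 0); rewrite ?addn0 //.
by move: hs; rewrite ht !size_cat addnCA.
Qed.

Lemma FBP_outgoing_balance (b : nat) : (forall v, out v <= b)%N ->
  `|(outgoing e Vp Vpx)%:R - (outgoing e Vp Vpy)%:R| <= (2 * b + 2)%:R :> R.
Proof.
move=> out_le; have [t [p [s [q [r [ok _ ht [-> ->] [_ hr /(_ b out_le)[r_le le_r]]]]]]]] :=
  FBP_outputP FBP.
have : uniq (s ++ p ++ q) by rewrite uniq_catCA -ht (uniq_leaves ok).
rewrite cat_uniq => /and3P[us _ upq].
rewrite /outgoing !cut_big_set1 //; apply: near_half_balance r_le le_r.
by move: hr; rewrite ht !big_cat addnCA.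
Qed.

Variables (rho K : R).
Hypothesis P_contr : forall m n : nat, (m%:R <= beta * n%:R) ->
  powR (m%:R : R) (1 - d%:R^-1) <= rho * powR (n%:R : R) (1 - d%:R^-1).
Hypothesis K_ge0 : 0 <= K.
Hypothesis K_fix : K * rho + c = K.

Lemma FBP_cut_le : symmetric e ->
  (cut e Vpx Vpy)%:R <= 2 * K * powR (#|Vp|%:R : R) (1 - d%:R^-1).
Proof.
move=> e_sym; have [t [p [s [q [r [ok <- ht [-> ->] _]]]]]] := FBP_outputP FBP.
by rewrite set_cat (segment_cut_le P_contr K_ge0 K_fix e_sym ok ht).
Qed.

End FullyBalancedPartition.

Lemma mesh_edge_sym (T : finType) (S : {set {set T}}) : symmetric (mesh_edge S).
Proof.
move=> x y; rewrite /mesh_edge eq_sym; congr (_ && _).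
by apply: eq_existsb => s; rewrite (andbC (x \in s)).
Qed.

Lemma outgoing_set1_le (T : finType) (e : rel T) (Vp : {set T}) v :
  (outgoing e Vp [set v] <= #|[set y | e v y]|)%N.
Proof.
rewrite /outgoing /cut; apply: leq_trans (leq_imset_card (fun y => (v, y)) _).
apply: subset_leq_card; apply/subsetP=> -[x y]; rewrite !inE /= => /and3P[/eqP -> _ hy].
by apply/imsetP; exists y; rewrite ?inE.
Qed.

Lemma powR_nat_contraction (R : realType) (beta a : R) (m n : nat) :
  0 <= beta -> 0 <= a -> m%:R <= beta * n%:R ->
  powR (m%:R : R) a <= powR beta a * powR (n%:R : R) a.
Proof.
move=> beta0 a0 hmn; rewrite -powRM //; apply: ge0_ler_powR => //.
all: by rewrite nnegrE ?mulr_ge0.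
Qed.

Theorem lemma4 (R : realType) (d b : nat) (alpha eps c : R) :
  (1 < d)%N -> 0 < eps < 1 -> 0 < c ->
  exists C : R, 0 < C /\
  forall (T : finType) (pos : T -> 'rV[R]_d) (S : {set {set T}})
         (Vp Vpx Vpy : {set T}),
    well_shaped_mesh pos S alpha b ->
    FBP_output (mesh_edge S) d eps c Vp Vpx Vpy ->
    [/\ (cut (mesh_edge S) Vpx Vpy)%:R <= C * powR (#|Vp|%:R) (1 - d%:R^-1),
        `|(#|Vpx|%:R - #|Vpy|%:R : R)| <= C
      & `|((outgoing (mesh_edge S) Vp Vpx)%:R
            - (outgoing (mesh_edge S) Vp Vpy)%:R : R)| <= C].
Proof.
move=> d_gt1 /andP[eps_gt0 eps_lt1] c_gt0.
set a := 1 - d%:R^-1; set beta := (d%:R + 1 + eps) / (d%:R + 2).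
have d_ge0 : 0 <= d%:R :> R by [].
have a_gt0 : 0 < a by rewrite subr_gt0 invf_lt1 ?ltr1n // (ltr0n R) ltnW.
have beta_ge0 : 0 <= beta by apply: divr_ge0; lra.
have beta_lt1 : beta < 1 by rewrite ltr_pdivrMr; lra.
set rho := powR beta a.
have rho_lt1 : rho < 1.
  by have := gt0_ltr_powR a_gt0 beta_ge0 ler01 beta_lt1; rewrite powR1.
set K := c / (1 - rho).
have K_ge0 : 0 <= K by apply: divr_ge0; lra.
have K_fix : K * rho + c = K by rewrite /K; field; lra.
have C_ge (m : nat) : (m <= 2 * b + 2)%N -> m%:R <= 2 * K + (2 * b + 2)%:R.
  by move=> hm; rewrite -[leLHS]add0r lerD ?ler_nat // mulr_ge0.
exists (2 * K + (2 * b + 2)%:R); split.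
  by rewrite ltr_wpDl ?ltr0n ?addn2 // mulr_ge0.
move=> T pos S Vp Vpx Vpy [_ _ _ _ deg] FBP.
have out_le v : (outgoing (mesh_edge S) Vp [set v] <= b)%N.
  exact: leq_trans (outgoing_set1_le _ _ _) (deg v).
have P_contr m n := @powR_nat_contraction R beta a m n beta_ge0 (ltW a_gt0).
split.
- apply: le_trans (FBP_cut_le FBP P_contr K_ge0 K_fix (@mesh_edge_sym T S)) _.
  by rewrite ler_wpM2r ?powR_ge0 // lerDl.
- by apply: le_trans (FBP_card_balance FBP) (C_ge _ _); rewrite leq_addl.
- exact: le_trans (FBP_outgoing_balance FBP out_le) (C_ge _ _).
Qed.
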